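(* Let $F=\breve F(\alpha_1,\dots,\alpha_t)$ be a fence. Every statistic in \[ \operatorname{Span}_{\mathbb R}\Big(\bigcup_{i=1}^t\bigcup_{j=1}^{\beta_i}\{\alpha_i\hat\chi_{(i,j)}-j\hat\chi_p-(\alpha_i-j)\hat\chi_v : p\text{ the peak of }S_i,\ v\text{ the valley of }S_i\}\Big) \] is homomesic under promotion $\mathrm{Pro}=\tau_{x_n}\circ\cdots\circ\tau_{x_1}$ acting on $\mathcal J(F)$.
   Context: Fences: let $\alpha=(\alpha_1,\dots,\alpha_t)$ be positive integers with $t\ge2$ and $\alpha_1,\alpha_t\ge2$. Put $a_0=0$, $a_i=\alpha_1+\dots+\alpha_i$, $n=a_t-1$. The fence $\breve F(\alpha)$ is the poset on $\{x_1,\dots,x_n\}$ whose cover relations are: for $1\le j\le n-1$ with $a_{i-1}\le j<a_i$, $x_j\lessdot x_{j+1}$ if $i$ is odd and $x_j\gtrdot x_{j+1}$ if $i$ is even. Segments: $S_1=\{x_j:1\le j\le a_1\}$, $S_i=\{x_j:a_{i-1}\le j\le a_i\}$ for $2\le i\le t-1$, $S_t=\{x_j:a_{t-1}\le j\le n\}$. Shared elements $x_{a_i}$ ($i\in[t-1]$) are peaks (cover two elements) for $i$ odd and valleys (covered by two elements) for $i$ even; the peak (valley) of $S_i$ is the shared element of $S_i$ that is a peak (valley), and the corresponding $\hat\chi$ is identically zero if none exists. $\breve S_i$ is the set of non-shared elements of $S_i$, $\beta_i=\alpha_i-1$, $s_{(i,j)}$ the $j$-th smallest element of $\breve S_i$,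 $\hat\chi_{(i,j)}=\hat\chi_{s_{(i,j)}}$, where $\hat\chi_q(I)=1$ if $q\in I$ and $0$ otherwise for order ideals $I\in\mathcal J(F)$. The toggle $\tau_q:\mathcal J(F)\to\mathcal J(F)$ adds $q$ to $I$ if $q\in\min(F\setminus I)$, removes $q$ if $q\in\max(I)$, and fixes $I$ otherwise; composition is applied right to left. A statistic is homomesic under a bijection if its average over every orbit is the same constant. *)

From mathcomp Require Import all_boot all_order all_algebra.
From mathcomp Require Import reals.
Set Implicit Arguments. Unset Strict Implicit. Unset Printing Implicit Defensive.
Import Order.TTheory GRing.Theory Num.Theory.

(* Conventions: alpha : seq nat is (alpha_1,...,alpha_t), t = size alpha,
   alpha_i = nth 0 alpha i.-1 (1-based).  The element x_j (1 <= j <= n) of the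
   fence is represented by the ordinal (j-1 : 'I_n), i.e. u : 'I_n is x_{u+1}. *)
Section Fence.
Variable alpha : seq nat.

Definition tt_ := size alpha.
Definition alp (i : nat) : nat := nth 0 alpha i.-1.
Definition aa (i : nat) : nat := \sum_(k < i) nth 0 alpha k.
Definition nn : nat := (aa tt_).-1.

(* x_j <. x_{j+1} : j lies in segment i (a_{i-1} <= j < a_i) with i odd *)
Definition upstep (j : nat) : bool :=
  [exists i : 'I_tt_.+1, [&& 0 < (i : nat), aa (i : nat).-1 <= j, j < aa i & odd i]].
(* x_j >. x_{j+1} : j lies in segment i with i even *)
Definition downstep (j : nat) : bool :=
  [exists i : 'I_tt_.+1, [&& 0 < (i : nat), aa (i : nat).-1 <= j, j < aa i & ~~ odd i]].

(* cover relation u <. v (u is covered by v) *)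
Definition covered (u v : 'I_nn) : bool :=
  ((v : nat) == u.+1) && upstep u.+1 || ((u : nat) == v.+1) && downstep v.+1.

Definition fle (u v : 'I_nn) : bool := connect covered u v.
Definition flt (u v : 'I_nn) : bool := (u != v) && fle u v.

Definition is_ideal (I : {set 'I_nn}) : bool :=
  [forall u, forall v, (fle u v && (v \in I)) ==> (u \in I)].

Definition toggle (q : 'I_nn) (I : {set 'I_nn}) : {set 'I_nn} :=
  if (q \notin I) && [forall u, flt u q ==> (u \in I)] then q |: I
  else if (q \in I) && [forall u, flt q u ==> (u \notin I)] then I :\ q
  else I.

Definition Pro (I : {set 'I_nn}) : {set 'I_nn} :=
  foldl (fun J q => toggle q J) I (enum 'I_nn).

Definition inS (i : nat) (u : 'I_nn) : bool :=
  let j := u.+1 in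
  if i == 1 then (1 <= j <= aa 1)
  else if i == tt_ then (aa tt_.-1 <= j <= nn)
  else (aa i.-1 <= j <= aa i).

Definition is_shared (u : 'I_nn) : bool :=
  [exists k : 'I_tt_, (0 < (k : nat)) && (u.+1 == aa k)].
Definition is_peak (u : 'I_nn) : bool :=
  [exists k : 'I_tt_, [&& 0 < (k : nat), u.+1 == aa k & odd k]].
Definition is_valley (u : 'I_nn) : bool :=
  [exists k : 'I_tt_, [&& 0 < (k : nat), u.+1 == aa k & ~~ odd k]].

Definition inbreveS (i : nat) (u : 'I_nn) : bool := inS i u && ~~ is_shared u.

Variable R : realType.

Definition chi (q : 'I_nn) (I : {set 'I_nn}) : R := (q \in I)%:R.

(* hat chi_(i,j) = hat chi_{s_(i,j)}, s_(i,j) the j-th smallest element of breve S_i,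
   i.e. the element of breve S_i with exactly j-1 elements of breve S_i below it *)
Definition chi_ij (i j : nat) (I : {set 'I_nn}) : R :=
  \sum_(u : 'I_nn | inbreveS i u &&
          (#|[set v | inbreveS i v & flt v u]| == j.-1)) chi u I.

Definition chi_peak (i : nat) (I : {set 'I_nn}) : R :=
  \sum_(u : 'I_nn | inS i u && is_peak u) chi u I.
Definition chi_valley (i : nat) (I : {set 'I_nn}) : R :=
  \sum_(u : 'I_nn | inS i u && is_valley u) chi u I.

Definition gen (i j : nat) (I : {set 'I_nn}) : R :=
  (alp i)%:R * chi_ij i j I - j%:R * chi_peak i I - (alp i - j)%N%:R * chi_valley i I.

Definition span_stat (c : nat -> nat -> R) (I : {set 'I_nn}) : R :=
  \sum_(1 <= i < tt_.+1) \sum_(1 <= j < (alp i).-1.+1) c i j * gen i j I.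

End Fence.

Definition homomesic (S : finType) (R : realType) (P : pred S) (T : S -> S)
  (f : S -> R) : Prop :=
  exists c : R, forall x, P x ->
    ((\sum_(y <- orbit T x) f y) / (size (orbit T x))%:R = c)%R.

From Pilot Require Import Defs.
From mathcomp Require Import all_boot all_order all_algebra.
From mathcomp Require Import reals.
From mathcomp Require Import zify ring.
Set Implicit Arguments. Unset Strict Implicit. Unset Printing Implicit Defensive.
Import Order.TTheory GRing.Theory Num.Theory.

(* Each generator equals a constant plus a coboundary [g (Pro I) - g I], so its average
   over every Pro-orbit is that constant.  Promotion toggles x_1, ..., x_n in this order;
   on an ascending segment of length [al] an ideal is an initial run [l < m] of the
   positions [0 .. al], and Pro shortens it by one (for [m >= 2]) or makes it constant,
   equal to the new state of the bottom element (for [m <= 1]).  A case analysis on [m]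
   then gives, with [o] and [n] the indicators of [I] and [Pro I] along the segment,
     al o_j - j o_al - (al - j) o_0 = Phi n - Phi o,
     Phi x = (al - j) #{l < j | x_l} - j #{j <= l < al | x_l}.
   Descending segments become ascending ones after complementing the ideals. *)

Lemma sum_traject_telescope (S : Type) (V : zmodType) (T : S -> S) (g : S -> V) n x :
  (\sum_(y <- traject T x n) (g (T y) - g y) = g (iter n T x) - g x)%R.
Proof.
elim: n x => [|n IH] x /=; first by rewrite big_nil subrr.
by rewrite big_cons IH -iterSr /= addrC addrA subrK.
Qed.

Lemma homomesic_coboundary (S : finType) (R : realType) (P : pred S) (T : S -> S)
    (f g : S -> R) (c : R) :
  (forall x, P x -> P (T x)) -> {in P &, injective T} ->
  (forall x, P x -> f x = c + g (T x) - g x)%R -> homomesic P T f.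
Proof.
move=> PT T_inj fE; exists c => x Px.
have cycT : fcycle T (orbit T x) by apply: (@cycle_orbit_in _ T P) => // y; apply: PT.
have iter_order : iter (order T x) T x = x by move/(orbitPcycle 0 4): cycT.
have P_iter k : P (iter k T x) by elim: k => [|k IH] //=; apply: PT.
have -> : (\sum_(y <- orbit T x) f y = \sum_(y <- orbit T x) (c + (g (T y) - g y)))%R.
  by apply: eq_big_seq => y /trajectP [k _ ->]; rewrite fE ?P_iter // addrA.
rewrite big_split /= {2}/orbit sum_traject_telescope iter_order subrr addr0.
rewrite big_const_seq count_predT size_orbit iter_addr_0 -[(c *+ _)%R]mulr_natr mulfK //.
by rewrite pnatr_eq0 -lt0n -size_orbit; case: (orbit T x) (in_orbit T x).
Qed.

Lemma antitone_prefix (f : nat -> bool) k :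
  (forall l, l < k -> f l.+1 -> f l) -> exists2 m, m <= k.+1 & forall l, l <= k -> f l = (l < m).
Proof.
elim: k => [|k IH] f_anti.
  by exists (f 0) => [|l]; [case: (f 0) | rewrite leqn0 => /eqP ->; case: (f 0)].
have [m mk fE] : exists2 m, m <= k.+1 & forall l, l <= k -> f l = (l < m).
  by apply: IH => l lk; apply: f_anti; apply: ltnW.
case fk1: (f k.+1).
  have km : k < m by rewrite -(fE k) //; apply: (f_anti k).
  exists k.+2 => // l; rewrite leq_eqVlt ltnS => /orP [/eqP ->|lk]; first by rewrite fk1 ltnSn.
  by rewrite fE //; apply/idP/idP => _; lia.
exists m; first exact: leqW.
move=> l; rewrite leq_eqVlt ltnS => /orP [/eqP ->|]; last exact: fE.
by rewrite fk1; apply/esym/negbTE; rewrite -leqNgt; apply: leq_trans mk _.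
Qed.

Section ChainPotential.
Local Open Scope ring_scope.

Lemma sum_nat_lt (R : pzSemiRingType) a b p :
  \sum_(a <= l < b) (l < p)%N%:R = (minn b p - a)%N%:R :> R.
Proof.
elim: b => [|b IH]; first by rewrite big_geq // min0n sub0n.
have [ab|ba] := leqP a b; last by rewrite big_geq // (_ : minn b.+1 p - a = 0)%N //; lia.
rewrite big_nat_recr //= IH -natrD; apply: congr1; case: (ltnP b p) => bp /=; lia.
Qed.

Variables (R : comPzRingType) (al j : nat).
Hypothesis j_al : (0 < j < al)%N.

Definition chain_pot (x : nat -> bool) : R :=
  (al - j)%:R * \sum_(0 <= l < j) (x l)%:R - j%:R * \sum_(j <= l < al) (x l)%:R.

Lemma eq_chain_pot x y : (forall l, l < al -> x l = y l)%N -> chain_pot x = chain_pot y.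
Proof.
move=> xy; rewrite /chain_pot.
congr (_ * _ - _ * _); apply: eq_big_nat => l /andP [_ lt]; rewrite xy //; lia.
Qed.

Lemma chain_pot_const b : chain_pot (fun=> b) = 0.
Proof.
rewrite /chain_pot !sumr_const_nat subn0.
ring.
Qed.

Lemma chain_pot_prefix p :
  chain_pot (fun l => l < p)%N = ((al - j) * minn j p)%:R - (j * (minn al p - j))%:R.
Proof. by rewrite /chain_pot !sum_nat_lt subn0 !natrM. Qed.

Lemma chain_pot_prefixS p : (p < al)%N ->
  chain_pot (fun l => l < p.+1)%N - chain_pot (fun l => l < p)%N =
  if (p < j)%N then (al - j)%:R else - j%:R.
Proof.
move=> p_al; case: ltnP => pj; rewrite !chain_pot_prefix.
  have -> : (minn al p.+1 - j = 0)%N by lia.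
  have -> : (minn al p - j = 0)%N by lia.
  have -> : (minn j p.+1 = p.+1)%N by lia.
  have -> : (minn j p = p)%N by lia.
  rewrite mulnS natrD; ring.
have -> : (minn j p.+1 = j)%N by lia.
have -> : (minn j p = j)%N by lia.
have -> : (minn al p.+1 - j = (p - j).+1)%N by lia.
have -> : (minn al p - j = p - j)%N by lia.
rewrite mulnS natrD; ring.
Qed.

(* [o] and [n] are an ideal and its promotion along a chain [0 < 1 < ... < al] toggled from
   bottom to top; the new state [n 0] of the bottom is decided before the chain is reached. *)
Variables o n : nat -> bool.
Hypothesis o_anti : forall l, (l < al)%N -> o l.+1 -> o l.
Hypothesis n_step : forall l, (0 < l < al)%N -> n l = if o l then o l.+1 else n l.-1.
Hypothesis n_first : o 1 -> n 0.

Lemma promoted_chain_const : (forall l, 0 < l <= al -> ~~ o l)%N ->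
  forall l, (l < al)%N -> n l = n 0.
Proof.
move=> o_false; elim=> [//|l IH] l_al.
by rewrite n_step ?(negbTE (o_false _ _)) ?IH //; lia.
Qed.

Lemma promoted_chain_prefix m : (0 < m)%N -> (forall l, l <= al -> o l = (l <= m))%N ->
  forall l, (l < al)%N -> n l = (l < m)%N.
Proof.
move=> m_gt0 oE; elim=> [|l IH] l_al; first by rewrite n_first ?oE.
rewrite n_step ?oE //; [|lia..].
case: (leqP l.+1 m) => lm //; rewrite IH ?(ltnW l_al) //; apply/idP/idP => ?; lia.
Qed.

Lemma chain_pot_promotion :
  al%:R * (o j)%:R - j%:R * (o al)%:R - (al - j)%:R * (o 0)%:R = chain_pot n - chain_pot o.
Proof.
have j_gt0 : (0 < j)%N by lia.
have al_gt0 : (0 < al)%N by lia.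
have j_le_al : (j <= al)%N by lia.
have [m m_al oE] := antitone_prefix o_anti.
have -> : chain_pot o = chain_pot (fun l => l < m)%N.
  by apply: eq_chain_pot => l l_al; rewrite oE // ltnW.
have chain_pot0 : chain_pot (fun l => l < 0)%N = 0 by rewrite -(chain_pot_const false).
have n_zero : (m <= 1)%N -> chain_pot n = 0.
  move=> m_le1; rewrite -(chain_pot_const (n 0)); apply: eq_chain_pot.
  by apply: promoted_chain_const => l l_al; rewrite oE; lia.
rewrite !oE //.
case: m m_al oE n_zero => [|[|m]] m_al oE n_zero.
- by rewrite n_zero // chain_pot0 !ltn0 /=; ring.
- have := chain_pot_prefixS al_gt0; rewrite chain_pot0 subr0 j_gt0 => ->.
  by rewrite n_zero // !ltnS !leqn0 (gtn_eqF j_gt0) (gtn_eqF al_gt0) /=; ring.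
have -> : chain_pot n = chain_pot (fun l => l < m.+1)%N.
  by apply: eq_chain_pot; apply: promoted_chain_prefix => // l l_al; rewrite oE.
rewrite ltn0Sn natrB //=.
move: m_al; rewrite ltnS leq_eqVlt => /orP [/eqP m_al|m_al].
  have -> : chain_pot (fun l => l < m.+2)%N = chain_pot (fun l => l < m.+1)%N.
    by apply: eq_chain_pot => l; rewrite m_al => l_al; rewrite l_al ltnW.
  by rewrite m_al ltnSn ltnS j_le_al /=; ring.
rewrite -[chain_pot (fun l => l < m.+2)%N](subrK (chain_pot (fun l => l < m.+1)%N)).
rewrite chain_pot_prefixS // [(al < _)%N]ltnNge m_al ltnS; case: leqP => _ /=; rewrite ?natrB //; ring.
Qed.

End ChainPotential.

Section Toggles.
Variable alpha : seq nat.
Local Notation N := (nn alpha).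
Implicit Types (I J : {set 'I_N}) (u v w q : 'I_N).

Lemma idealP I : reflect (forall u v, fle u v -> v \in I -> u \in I) (is_ideal I).
Proof.
apply: (iffP forallP) => [idI u v uv vI | idI u].
  by have /forallP/(_ v)/implyP := idI u; apply; rewrite uv.
by apply/forallP => v; apply/implyP => /andP [uv vI]; exact: idI uv vI.
Qed.

Lemma covered_neq u v : covered u v -> u != v.
Proof. by case/orP => /andP [/eqP e _]; apply/eqP => uv; move: e; rewrite uv; lia. Qed.

Lemma covered_flt u v : covered u v -> flt u v.
Proof. by move=> uv; rewrite /flt covered_neq //; apply: connect1. Qed.

Lemma flt_covered_top u q : flt u q -> exists2 w, fle u w & covered w q.
Proof.
case/andP => uq /connectP [p pth qE].
case/lastP: p pth qE => [|p w] /=; first by move=> _ qE; rewrite qE eqxx in uq.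
rewrite rcons_path last_rcons => /andP [pth wq] ->.
by exists (last u p) => //; apply/connectP; exists p.
Qed.

Lemma flt_covered_bottom q u : flt q u -> exists2 w, covered q w & fle w u.
Proof.
case/andP => qu /connectP [[|w p] pth uE] /=; first by rewrite uE eqxx in qu.
by case/andP: pth => qw pth; exists w => //; apply/connectP; exists p.
Qed.

Lemma ideal_lower_coversE J q : is_ideal J ->
  [forall u, flt u q ==> (u \in J)] = [forall w, covered w q ==> (w \in J)].
Proof.
move=> /idealP idJ; apply/forallP/forallP => qJ w; apply/implyP => wq.
  by have /implyP := qJ w; apply; apply: covered_flt.
case: (flt_covered_top wq) => u wu uq.
by have /implyP/(_ uq) := qJ u; apply: idJ.
Qed.

Lemma ideal_upper_coversE J q : is_ideal J ->
  [forall u, flt q u ==> (u \notin J)] = ~~ [exists w, covered q w && (w \in J)].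
Proof.
move=> /idealP idJ; rewrite negb_exists; apply/forallP/forallP => qJ w.
  rewrite negb_and; case: (boolP (covered q w)) => //= qw.
  by have /implyP := qJ w; apply; apply: covered_flt.
apply/implyP => qw; case: (flt_covered_bottom qw) => u qu uw.
by have := qJ u; rewrite qu; apply: contra; apply: idJ.
Qed.

Lemma in_toggle_neq q J v : v != q -> (v \in toggle q J) = (v \in J).
Proof.
move=> vq; rewrite /toggle; case: ifP => _; first by rewrite in_setU1 (negbTE vq).
by case: ifP => _ //; rewrite in_setD1 vq.
Qed.

Lemma in_toggle q J : is_ideal J ->
  (q \in toggle q J) = if q \notin J then [forall w, covered w q ==> (w \in J)]
                       else [exists w, covered q w && (w \in J)].
Proof.
move=> idJ; rewrite /toggle ideal_lower_coversE // ideal_upper_coversE //.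
case: (boolP (q \in J)) => qJ /=.
  by case: [exists _, _]; rewrite /= ?in_setD1 ?eqxx ?qJ.
by case: [forall _, _]; rewrite /= ?in_setU1 ?eqxx // (negbTE qJ).
Qed.

Lemma toggle_ideal q J : is_ideal J -> is_ideal (toggle q J).
Proof.
move=> /[dup] idJ /idealP idJ'; rewrite /toggle.
case: ifP => [/andP [qJ /forallP below] | _].
  apply/idealP => u v uv; rewrite !in_setU1 => /orP [/eqP vq | vJ]; last by rewrite (idJ' u v) ?orbT.
  subst v; case: (eqVneq u q) => //= uq.
  by have /implyP := below u; apply; rewrite /flt uq.
case: ifP => // /andP [qJ /forallP above].
apply/idealP => u v uv; rewrite !in_setD1 => /andP [vq vJ].
rewrite (idJ' u v) // andbT; apply: contraNneq vq => uq; subst u.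
by apply: contraTT vJ => vq; have /implyP := above v; apply; rewrite /flt eq_sym vq.
Qed.

Lemma toggleK q J : is_ideal J -> toggle q (toggle q J) = J.
Proof.
move=> idJ; apply/setP => v; case: (eqVneq v q) => [->|vq]; last by rewrite !in_toggle_neq.
have below : [forall w, covered w q ==> (w \in toggle q J)] = [forall w, covered w q ==> (w \in J)].
  by apply: eq_forallb => w; case: (boolP (covered w q)) => //= /covered_neq wq; rewrite in_toggle_neq.
have above : [exists w, covered q w && (w \in toggle q J)] = [exists w, covered q w && (w \in J)].
  apply: eq_existsb => w; case: (boolP (covered q w)) => //= /covered_neq qw.
  by rewrite in_toggle_neq // eq_sym.
rewrite in_toggle ?toggle_ideal // below above.
have := in_toggle q idJ; case: (boolP (q \in J)) => qJ /= qtJ.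
  case: (boolP (q \in toggle q J)) => [qt|_] /=; first by rewrite -qtJ.
  apply/forallP => w; apply/implyP => wq; exact: (idealP _ idJ) _ _ (connect1 wq) qJ.
case: (boolP (q \in toggle q J)) => [_|qt] /=; last by rewrite -qtJ (negbTE qt).
apply/negbTE; rewrite negb_exists; apply/forallP => w; rewrite negb_and.
case: (boolP (covered q w)) => //= qw; apply: contra qJ; apply: (idealP _ idJ).
exact: connect1.
Qed.

Definition toggles (s : seq 'I_N) J := foldl (fun J q => toggle q J) J s.

Lemma toggles_ideal s J : is_ideal J -> is_ideal (toggles s J).
Proof. by elim: s J => //= q s IH J idJ; apply/IH/toggle_ideal. Qed.

Lemma toggles_inj s I J : is_ideal I -> is_ideal J -> toggles s I = toggles s J -> I = J.
Proof.
elim: s I J => //= q s IH I J idI idJ /(IH _ _ (toggle_ideal q idI) (toggle_ideal q idJ)).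
by move/(congr1 (toggle q)); rewrite !toggleK.
Qed.

Lemma in_toggles_notin s J w : w \notin s -> (w \in toggles s J) = (w \in J).
Proof.
elim: s J => //= q s IH J; rewrite in_cons negb_or => /andP [wq ws].
by rewrite IH // in_toggle_neq.
Qed.

Lemma Pro_ideal I : is_ideal I -> is_ideal (Pro I).
Proof. exact: toggles_ideal. Qed.

Lemma Pro_inj : {in @is_ideal alpha &, injective (@Pro alpha)}.
Proof. by move=> I J idI idJ; apply: toggles_inj. Qed.

(* Promotion toggles in increasing order: when [u] is toggled, every [w < u] already
   has its new state. *)
Lemma in_Pro I u : is_ideal I ->
  let seen w := if w < u then w \in Pro I else w \in I in
  (u \in Pro I) = if u \notin I then [forall w, covered w u ==> seen w]
                  else [exists w, covered u w && seen w].
Proof.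
move=> idI seen.
have enumE : enum 'I_N = take u (enum 'I_N) ++ u :: drop u.+1 (enum 'I_N).
  by rewrite -{1}(cat_take_drop u (enum 'I_N)) (drop_nth u) ?size_enum_ord ?nth_ord_enum.
have := enum_uniq 'I_N; rewrite enumE cat_uniq => /and3P [_ notin_pre /andP [u_post _]].
set pre := take u _ in enumE notin_pre *; set post := drop u.+1 _ in enumE notin_pre u_post.
have in_pre w : (w \in pre) = (w < u) by rewrite in_take ?mem_enum // index_enum_ord.
have ProE : Pro I = toggles post (toggle u (toggles pre I)) by rewrite /Pro enumE foldl_cat.
have seenE w : w != u -> (w \in toggles pre I) = seen w.
  move=> wu; rewrite /seen -in_pre; case: ifP => [w_pre|/negbT w_pre]; last first.
    exact: in_toggles_notin.
  have : w \notin u :: post by apply: contra notin_pre => w_post; apply/hasP; exists w.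
  by rewrite in_cons negb_or => /andP [_ w_post]; rewrite ProE [in RHS]in_toggles_notin ?in_toggle_neq.
rewrite ProE in_toggles_notin // in_toggle ?toggles_ideal // in_toggles_notin ?in_pre ?ltnn //.
case: (u \in I) => /=.
  apply: eq_existsb => w; case: (boolP (covered u w)) => //= uw.
  by rewrite seenE // eq_sym covered_neq.
apply: eq_forallb => w; case: (boolP (covered w u)) => //= wu.
by rewrite seenE // covered_neq.
Qed.

End Toggles.

Section Fence.
Variable alpha : seq nat.
Hypothesis t_ge2 : 2 <= size alpha.
Hypothesis alpha_pos : all (fun x => 0 < x) alpha.
Hypothesis head_ge2 : 2 <= head 0 alpha.
Hypothesis last_ge2 : 2 <= last 0 alpha.
Local Notation t := (size alpha).
Local Notation N := (nn alpha).
Local Notation aa := (aa alpha).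
Local Notation alp := (alp alpha).
Implicit Types (I J : {set 'I_N}) (u v w q : 'I_N).

Lemma aa0 : aa 0 = 0.
Proof. by rewrite /Defs.aa big_ord0. Qed.

Lemma aaS k : aa k.+1 = aa k + nth 0 alpha k.
Proof. by rewrite /Defs.aa big_ord_recr. Qed.

Lemma aaE i : 0 < i -> aa i = aa i.-1 + alp i.
Proof. by case: i => // i _; rewrite aaS. Qed.

Lemma nth_alpha_gt0 k : k < t -> 0 < nth 0 alpha k.
Proof. by move=> kt; move/all_nthP: alpha_pos; apply. Qed.

Lemma alp_gt0 i : 0 < i <= t -> 0 < alp i.
Proof. by case: i => // i /= /nth_alpha_gt0. Qed.

Lemma leq_aa i k : i <= k -> aa i <= aa k.
Proof. by move=> /subnK <-; elim: (k - i) => [|m IH] //; rewrite addSn aaS; lia. Qed.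

Lemma leq_aa_sub i k : i <= k <= t -> aa i + (k - i) <= aa k.
Proof.
case/andP=> /subnK <-; elim: (k - i) => [|m IH] /=; first by rewrite add0n subnn addn0.
rewrite addSn aaS => mit; have := nth_alpha_gt0 mit; have := IH (ltnW mit); lia.
Qed.

Lemma leq_aa_eq i k : i <= t -> k <= t -> (aa i <= aa k) = (i <= k).
Proof.
move=> it kt; apply/idP/idP => [|/leq_aa //]; apply: contraTT; rewrite -!ltnNge => ki.
by have := @leq_aa_sub k i; rewrite it (ltnW ki) => /(_ isT); lia.
Qed.

Lemma ltn_aa_eq i k : i <= t -> k <= t -> (aa i < aa k) = (i < k).
Proof. by move=> it kt; rewrite !ltnNge leq_aa_eq. Qed.

Lemma segment_unique i k p : 0 < i <= t -> 0 < k <= t ->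
  aa i.-1 <= p < aa i -> aa k.-1 <= p < aa k -> i = k.
Proof.
move=> /andP [i0 it] /andP [k0 kt] /andP [h1 h2] /andP [h3 h4].
case: (ltngtP i k) => // ik; [have := @leq_aa i k.-1 | have := @leq_aa k i.-1]; lia.
Qed.

Lemma stepE i p : 0 < i <= t -> aa i.-1 <= p < aa i ->
  upstep alpha p = odd i /\ downstep alpha p = ~~ odd i.
Proof.
move=> /andP [i0 it] /andP [p_lo p_hi].
have segE (k : 'I_t.+1) : [&& 0 < k, aa k.-1 <= p & p < aa k] -> k = i :> nat.
  case/and3P=> k0 k_lo k_hi; apply: (@segment_unique k i p); rewrite ?i0 ?k0 ?k_lo ?p_lo //.
  by rewrite -ltnS ltn_ord.
split; apply/existsP/idP => [[k /and4P [k0 k_lo k_hi]]|odd_i].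
- by rewrite (segE k) ?k0 ?k_lo.
- by exists (Ordinal (it : i < t.+1)); rewrite /= i0 p_lo p_hi odd_i.
- by rewrite (segE k) ?k0 ?k_lo.
- by exists (Ordinal (it : i < t.+1)); rewrite /= i0 p_lo p_hi odd_i.
Qed.

Lemma alp1_ge2 : 2 <= alp 1.
Proof. by move: head_ge2; case: alpha t_ge2. Qed.

Lemma alpt_ge2 : 2 <= alp t.
Proof. by move: last_ge2; rewrite /Defs.alp (last_nth 0); case: alpha t_ge2. Qed.

Lemma aa1_ge2 : 2 <= aa 1.
Proof. by rewrite aaE // aa0 add0n alp1_ge2. Qed.

Lemma nnE : N.+1 = aa t.
Proof. by rewrite /nn prednK // (leq_trans _ (@leq_aa 1 t _)) ?(ltnW t_ge2) // ltnW // aa1_ge2. Qed.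

Lemma downstep_not_upstep p : downstep alpha p -> ~~ upstep alpha p.
Proof.
case/existsP=> k /and4P [k0 h1 h2 ok].
have hk : 0 < k <= t by rewrite k0 -ltnS ltn_ord.
by case: (stepE hk (p:=p)) => [|-> _] //; rewrite h1 h2.
Qed.

(* [x_p \in J] for the 1-based position [p]; false outside [1 .. n]. *)
Definition inx (J : {set 'I_N}) (p : nat) : bool := [exists w : 'I_N, (w.+1 == p) && (w \in J)].

Lemma inx_ord J w : inx J w.+1 = (w \in J).
Proof.
rewrite /inx; apply/idP/idP => [/existsP [w' /andP [/eqP e h]]|h]; last by apply/existsP; exists w; rewrite eqxx.
by have -> : w = w' by apply/val_inj; case: e.
Qed.

Lemma inx_out J p : ~~ (0 < p <= N) -> inx J p = false.
Proof.
move=> h; rewrite /inx; apply/negbTE/negP => /existsP [w /andP [/eqP e _]]; move: h; rewrite -e.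
by rewrite ltn_ord.
Qed.

Lemma inx0 J : inx J 0 = false.
Proof. exact: inx_out. Qed.

Lemma sum_chi_inx (R : realType) J (P : pred 'I_N) p :
  (forall u, P u = (u.+1 == p)) ->
  (\sum_(u | P u) chi R u J = (inx J p)%:R)%R.
Proof.
move=> hP; case: (boolP (inx J p)) => [hb | nb].
  move: (hb); rewrite /inx => /existsP [w /andP [/eqP wp wJ]].
  rewrite (big_pred1 w); first by rewrite /chi wJ.
  move=> u; rewrite hP /= -wp; apply/eqP/eqP => [[]|->] //; exact: val_inj.
rewrite big1 // => u; rewrite hP => /eqP up; rewrite /chi.
by move: nb; rewrite -up inx_ord => /negbTE ->.
Qed.

Lemma inSE i v : 0 < i <= t -> inS i v = (aa i.-1 <= v.+1 <= aa i).
Proof.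
move=> i_t; have := ltn_ord v; have := nnE; rewrite /inS /tt_.
case: eqP => [-> /=|_]; first by rewrite aa0.
case: eqP => [-> /=|_] //; lia.
Qed.

Lemma exists_sharedE (P : nat -> bool) i v : 0 < i <= t -> aa i.-1 <= v.+1 <= aa i ->
  [exists k : 'I_t, [&& 0 < (k : nat), v.+1 == aa k & P k]]
  = ((v.+1 == aa i) && P i) || ((v.+1 == aa i.-1) && P i.-1).
Proof.
move=> i_t v_S; have := ltn_ord v; have := nnE => vN NE.
apply/existsP/idP.
  case=> k /and3P [k0 /eqP e pk].
  have kt := ltn_ord k.
  have h1 : i.-1 <= k by rewrite -leq_aa_eq; lia.
  have h2 : k <= i by rewrite -leq_aa_eq; lia.
  have [ek|ek] : k = i :> nat \/ k = i.-1 :> nat by lia.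
    by rewrite -ek e eqxx pk.
  by rewrite -ek e eqxx pk orbT.
case/orP => /andP [/eqP e pk].
  have it : i < t by rewrite -(ltn_aa_eq (i:=i) (k:=t)) //; lia.
  by exists (Ordinal it); rewrite /= e eqxx pk andbT; lia.
have i0 : 0 < i.-1 by case: (posnP i.-1) e => // ->; rewrite aa0.
have it : i.-1 < t by lia.
by exists (Ordinal it); rewrite /= e eqxx pk i0.
Qed.

Lemma inS_peakE i v : 0 < i <= t ->
  (inS i v && is_peak v) = ((v.+1 == aa i) && odd i) || ((v.+1 == aa i.-1) && odd i.-1).
Proof.
move=> i_t; rewrite inSE //; case: (boolP (aa i.-1 <= v.+1 <= aa i)) => v_S /=.
  by rewrite /is_peak (exists_sharedE odd i_t v_S).
apply/esym/negbTE; apply: contra v_S => /orP [] /andP [/eqP -> _];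
  have := leq_aa (i:=i.-1) (k:=i); lia.
Qed.

Lemma inS_valleyE i v : 0 < i <= t ->
  (inS i v && is_valley v) = ((v.+1 == aa i) && ~~ odd i) || ((v.+1 == aa i.-1) && ~~ odd i.-1).
Proof.
move=> i_t; rewrite inSE //; case: (boolP (aa i.-1 <= v.+1 <= aa i)) => v_S /=.
  by rewrite /is_valley (exists_sharedE (fun k => ~~ odd k) i_t v_S).
apply/esym/negbTE; apply: contra v_S => /orP [] /andP [/eqP -> _];
  have := leq_aa (i:=i.-1) (k:=i); lia.
Qed.

Lemma inbreveSE i v : 0 < i <= t -> inbreveS i v = (aa i.-1 < v.+1 < aa i).
Proof.
move=> i_t; rewrite /inbreveS inSE //.
case: (boolP (aa i.-1 <= v.+1 <= aa i)) => v_S /=; last by apply/esym/negbTE; apply: contra v_S; lia.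
have -> : is_shared v = [exists k : 'I_t, [&& 0 < (k : nat), v.+1 == aa k & true]].
  by apply: eq_existsb => k; rewrite andbT.
rewrite (exists_sharedE predT i_t v_S) /= !andbT; lia.
Qed.

Definition height (p : nat) : int := (\sum_(k < p) (if upstep alpha k.+1 then 1 else -1))%R.

Lemma heightS k : height k.+1 = (height k + (if upstep alpha k.+1 then 1 else -1))%R.
Proof. by rewrite /height big_ord_recr. Qed.

Lemma height_covered u v : covered u v -> height v = (height u + 1)%R.
Proof.
rewrite /covered => /orP [] /andP [/eqP vE step]; first by rewrite vE heightS step.
by rewrite vE heightS (negbTE (downstep_not_upstep step)) -addrA addNr addr0.
Qed.

Lemma height_path u (p : seq 'I_N) :
  path (@covered alpha) u p -> height (last u p) = (height u + (size p)%:Z)%R.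
Proof.
elim: p u => [|y p IH] u /=; first by rewrite addr0.
case/andP => c pth; rewrite IH // (height_covered c) -addrA; congr (_ + _)%R.
Qed.

Lemma height_flt u v : flt u v -> (height u < height v)%R.
Proof.
case/andP => nuv /connectP [p pth e]; rewrite e (height_path pth).
case: p pth e => [|y p] _ e; first by rewrite e eqxx in nuv.
by rewrite ltrDl.
Qed.

Lemma height_up a d : (forall k, a <= k < a + d -> upstep alpha k.+1) ->
  height (a + d) = (height a + d%:Z)%R.
Proof.
elim: d => [|d IH] h; first by rewrite addn0 addr0.
rewrite addnS heightS h; last lia.
rewrite IH; last by move=> k hk; apply: h; lia.
by rewrite -addrA -addn1 PoszD.
Qed.

Lemma height_down a d : (forall k, a <= k < a + d -> ~~ upstep alpha k.+1) ->
  height (a + d) = (height a - d%:Z)%R.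
Proof.
elim: d => [|d IH] h; first by rewrite addn0 subr0.
rewrite addnS heightS (negbTE (h _ _)); last lia.
rewrite IH; last by move=> k hk; apply: h; lia.
by rewrite -addrA -opprD -addn1 PoszD.
Qed.

Lemma fle_up v u : v <= u -> (forall k, v <= k < u -> upstep alpha k.+1) -> fle v u.
Proof.
move=> vu; have [d ed] : exists d, (u : nat) = v + d by exists (u - v); lia.
elim: d u vu ed => [|d IH] u vu ed h.
  have uv : u = v by apply: val_inj => /=; lia.
  by rewrite uv; apply: connect0.
have wN : v + d < N by have := ltn_ord u; lia.
pose w : 'I_N := Ordinal wN.
apply: (connect_trans (y:=w)).
  apply: IH => //=; [lia | move=> k hk; apply: h; lia].
apply: connect1; rewrite /covered /= ed addnS eqxx /=; apply/orP; left; apply: h; lia.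
Qed.

Lemma fle_down u v : u <= v -> (forall k, u <= k < v -> downstep alpha k.+1) -> fle v u.
Proof.
move=> uv; have [d ed] : exists d, (v : nat) = u + d by exists (v - u); lia.
elim: d v uv ed => [|d IH] v uv ed h.
  have e2 : v = u by apply: val_inj => /=; lia.
  by rewrite e2; apply: connect0.
have wN : u + d < N by have := ltn_ord v; lia.
pose w : 'I_N := Ordinal wN.
apply: (connect_trans (y:=w)); last first.
  apply: IH => //=; [lia | move=> k hk; apply: h; lia].
apply: connect1; rewrite /covered /= ed addnS eqxx /= orbC; apply/orP; left; apply: h; lia.
Qed.

Lemma flt_breveS_odd i u v : 0 < i <= t -> odd i -> inbreveS i u -> inbreveS i v ->
  flt v u = (v < u).
Proof.
move=> i_t odd_i; rewrite !inbreveSE // => u_S v_S.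
have seg_step : forall k, aa i.-1 <= k < aa i -> upstep alpha k = true.
  by move=> k k_S; case: (stepE i_t k_S) => -> _.
case: (ltnP v u) => vu.
  rewrite /flt; apply/andP; split; first by rewrite -val_eqE /= neq_ltn vu.
  apply: fle_up; [lia | move=> k k_S; apply: seg_step; lia].
have e : height (u + (v - u)) = (height u + (v - u)%:Z)%R by apply: height_up => k k_S; apply: seg_step; lia.
rewrite subnKC // in e.
apply/negP => /height_flt; rewrite e; lia.
Qed.

Lemma flt_breveS_even i u v : 0 < i <= t -> ~~ odd i -> inbreveS i u -> inbreveS i v ->
  flt v u = (u < v).
Proof.
move=> i_t even_i; rewrite !inbreveSE // => u_S v_S.
have seg_step : forall k, aa i.-1 <= k < aa i -> downstep alpha k = true.
  by move=> k k_S; case: (stepE i_t k_S) => _ ->.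
case: (ltnP u v) => uv.
  rewrite /flt; apply/andP; split; first by rewrite -val_eqE /= neq_ltn uv orbT.
  apply: fle_down; [lia | move=> k k_S; apply: seg_step; lia].
have e : height (v + (u - v)) = (height v - (u - v)%:Z)%R.
  by apply: height_down => k k_S; apply: downstep_not_upstep; apply: seg_step; lia.
rewrite subnKC // in e.
apply/negP => /height_flt; rewrite e; lia.
Qed.

Lemma card_interval a b : #|[set v : 'I_N | a <= v < b]| = minn b N - a.
Proof.
rewrite -sum1dep_card -(big_mkord (fun k => a <= k < b) (fun _ => 1)) big_mkcond /=.
elim: N => [|m IH]; first by rewrite big_geq //; lia.
rewrite big_nat_recr //= IH; case: ifP => h; lia.
Qed.

Lemma chi_ij_odd (R : realType) i j I : 0 < i <= t -> odd i -> 0 < j < alp i ->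
  chi_ij R i j I = (inx I (aa i.-1 + j))%:R%R.
Proof.
move=> i_t odd_i j_al; rewrite /chi_ij; apply: sum_chi_inx => u.
have ai := aaE (i:=i); move: ai; case/andP: (i_t) => -> _ ai; have uN := ltn_ord u.
case: (boolP (inbreveS i u)) => u_S /=.
  have -> : [set v | inbreveS i v & flt v u] = [set v : 'I_N | aa i.-1 <= v < u].
    apply/setP => v; rewrite !inE.
    case: (boolP (inbreveS i v)) => v_S /=.
      rewrite (flt_breveS_odd i_t odd_i u_S v_S); move: v_S u_S; rewrite !inbreveSE // => v_S u_S.
      apply/idP/idP => ?; lia.
    move: v_S u_S; rewrite !inbreveSE // => v_S u_S; apply/esym/negP => ?; lia.
  rewrite card_interval; move: u_S; rewrite inbreveSE // => u_S; apply/idP/idP => /eqP ?; apply/eqP; lia.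
move: u_S; rewrite inbreveSE // => u_S; apply/esym/negP => /eqP ?; lia.
Qed.

Lemma chi_ij_even (R : realType) i j I : 0 < i <= t -> ~~ odd i -> 0 < j < alp i ->
  chi_ij R i j I = (inx I (aa i.-1 + (alp i - j)))%:R%R.
Proof.
move=> i_t even_i j_al; rewrite /chi_ij; apply: sum_chi_inx => u.
have ai := aaE (i:=i); move: ai; case/andP: (i_t) => -> _ ai; have uN := ltn_ord u.
have aN : aa i <= N.+1 by rewrite nnE leq_aa //; case/andP: i_t.
case: (boolP (inbreveS i u)) => u_S /=.
  have -> : [set v | inbreveS i v & flt v u] = [set v : 'I_N | u.+1 <= v < (aa i).-1].
    apply/setP => v; rewrite !inE.
    case: (boolP (inbreveS i v)) => v_S /=.
      rewrite (flt_breveS_even i_t even_i u_S v_S); move: v_S u_S; rewrite !inbreveSE // => v_S u_S.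
      apply/idP/idP => ?; lia.
    move: v_S u_S; rewrite !inbreveSE // => v_S u_S; apply/esym/negP => ?; lia.
  rewrite card_interval; move: u_S; rewrite inbreveSE // => u_S; apply/idP/idP => /eqP ?; apply/eqP; lia.
move: u_S; rewrite inbreveSE // => u_S; apply/esym/negP => /eqP ?; lia.
Qed.

Lemma odd_predn i : 0 < i -> odd i.-1 = ~~ odd i.
Proof. by case: i => //= i _; rewrite negbK. Qed.

Lemma chi_peak_odd (R : realType) i I : 0 < i <= t -> odd i ->
  chi_peak R i I = (inx I (aa i))%:R%R.
Proof.
move=> i_t odd_i; apply: sum_chi_inx => u; rewrite inS_peakE // odd_predn; last by case/andP: i_t.
by rewrite odd_i /= andbF orbF andbT.
Qed.

Lemma chi_valley_odd (R : realType) i I : 0 < i <= t -> odd i ->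
  chi_valley R i I = (inx I (aa i.-1))%:R%R.
Proof.
move=> i_t odd_i; apply: sum_chi_inx => u; rewrite inS_valleyE // odd_predn; last by case/andP: i_t.
by rewrite odd_i /= andbF andbT.
Qed.

Lemma chi_peak_even (R : realType) i I : 0 < i <= t -> ~~ odd i ->
  chi_peak R i I = (inx I (aa i.-1))%:R%R.
Proof.
move=> i_t even_i; apply: sum_chi_inx => u; rewrite inS_peakE // odd_predn; last by case/andP: i_t.
by rewrite (negbTE even_i) /= andbF andbT.
Qed.

Lemma chi_valley_even (R : realType) i I : 0 < i <= t -> ~~ odd i ->
  chi_valley R i I = (inx I (aa i))%:R%R.
Proof.
move=> i_t even_i; apply: sum_chi_inx => u; rewrite inS_valleyE // odd_predn; last by case/andP: i_t.
by rewrite even_i /= andbF orbF andbT.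
Qed.

Lemma in_Pro_notin I q : is_ideal I -> q \notin I ->
  (q \in Pro I) = ((0 < q) && upstep alpha q ==> inx (Pro I) q) &&
                  (downstep alpha q.+1 && (q.+1 < N) ==> inx I q.+2).
Proof.
move=> idI qI; rewrite in_Pro // qI /=; apply/forallP/andP => [below|[lo hi] w].
  split; apply/implyP; last first.
    case/andP=> down qN; have := below (Ordinal qN); rewrite /covered /= eqxx down orbT /=.
    by rewrite ltnNge leqnSn (inx_ord _ (Ordinal qN)).
  case/andP=> q0 up; have wN : q.-1 < N by have := ltn_ord q; lia.
  have := below (Ordinal wN); rewrite /covered /= prednK // eqxx up /= leqnn.
  by rewrite -[X in inx _ X](prednK q0) (inx_ord _ (Ordinal wN)).
apply/implyP; case/orP => /andP [/eqP qE step].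
  have wq : w < q by rewrite qE.
  by rewrite wq -inx_ord -qE; apply: (implyP lo); rewrite qE step andbT.
have qN : q.+1 < N by rewrite -qE ltn_ord.
by rewrite qE ltnNge leqnSn /= -inx_ord qE; apply: (implyP hi); rewrite step qN.
Qed.

Lemma in_Pro_in I q : is_ideal I -> q \in I ->
  (q \in Pro I) = (upstep alpha q.+1 && inx I q.+2) ||
                  [&& 0 < q, downstep alpha q & inx (Pro I) q].
Proof.
move=> idI qI; rewrite in_Pro // qI /=; apply/existsP/idP.
  case=> w /andP [/orP [] /andP [/eqP wE step] seen].
    by rewrite wE ltnNge leqnSn /= in seen; rewrite step -wE inx_ord seen.
  have wq : w < q by rewrite wE.
  by rewrite wq in seen; rewrite wE step /= inx_ord seen orbT.
case/orP => [/andP [up /existsP [w /andP [/eqP wE wI]]] | /and3P [q0 down /existsP [w /andP [/eqP wE wI]]]].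
  exists w; have wE' : (w : nat) = q.+1 by case: wE.
  by rewrite /covered wE' eqxx up ltnNge leqnSn.
move: down; rewrite -wE => down.
by exists w; rewrite /covered -wE eqxx down ltnSn wI orbT.
Qed.

Lemma inx_ideal_up I p : is_ideal I -> 0 < p -> upstep alpha p -> inx I p.+1 -> inx I p.
Proof.
move=> idI p0 up /existsP [w /andP [/eqP wE wI]].
have vN : p.-1 < N by have := ltn_ord w; lia.
rewrite -(prednK p0) (inx_ord _ (Ordinal vN)); apply: (idealP _ idI) wI; apply: connect1.
by rewrite /covered /= prednK // up andbT; apply/orP; left; apply/eqP; lia.
Qed.

Lemma inx_ideal_down I p : is_ideal I -> 0 < p -> p < N -> downstep alpha p -> inx I p -> inx I p.+1.
Proof.
move=> idI p0 pN down /existsP [w /andP [/eqP wE wI]].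
rewrite (inx_ord _ (Ordinal pN)); apply: (idealP _ idI) wI; apply: connect1.
by rewrite /covered /= wE down andbT; apply/orP; right.
Qed.

Lemma exists_ord_succ p : 0 < p <= N -> exists q : 'I_N, q.+1 = p.
Proof.
move=> p_N; have qN : p.-1 < N by lia.
by exists (Ordinal qN) => /=; lia.
Qed.

Lemma step_le_nn p : upstep alpha p || downstep alpha p -> p <= N.
Proof.
rewrite -ltnS nnE => /orP [] /existsP [k /and4P [_ _ p_k _]].
all: by apply: leq_trans p_k _; apply: leq_aa; rewrite -ltnS.
Qed.

Lemma first_stepE : upstep alpha 0 /\ downstep alpha 0 = false.
Proof.
have seg1 : 0 < 1 <= t by rewrite (ltnW t_ge2).
have pos0 : aa 0 <= 0 < aa 1 by rewrite aa0 (ltnW aa1_ge2).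
by case: (stepE seg1 pos0) => -> ->.
Qed.

Lemma last_stepE : upstep alpha N = odd t /\ downstep alpha N = ~~ odd t.
Proof.
apply: stepE; first by rewrite leqnn (ltnW t_ge2).
by have := alpt_ge2; have := @aaE t; rewrite -nnE; lia.
Qed.

Lemma downstep_gt0 p : downstep alpha p -> 0 < p.
Proof. by case: (posnP p) => // ->; rewrite (proj2 first_stepE). Qed.

(* The fence is extended by [x_0] and, when [t] is even, by [x_(n+1)]: both would be
   minimal elements, so they count as members of every ideal. *)
Definition inx_ext J p : bool := (p == 0) || (p == N.+1) && ~~ odd t || inx J p.

Lemma inx_extE J p : 0 < p <= N -> inx_ext J p = inx J p.
Proof.
move=> p_N; rewrite /inx_ext.
by have [-> ->] : (p == 0) = false /\ (p == N.+1) = false by lia.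
Qed.

Lemma inx_ext_le J p : p <= N -> inx_ext J p = (0 < p) ==> inx J p.
Proof. by case: (posnP p) => [-> //|p0 pN]; rewrite inx_extE ?p0. Qed.

Lemma inx_ext_succ_up J p : upstep alpha p -> inx_ext J p.+1 = inx J p.+1.
Proof.
move=> up; rewrite /inx_ext /=; case: eqP => // /eqP; rewrite eqSS => /eqP pN.
by move: up; rewrite pN (proj1 last_stepE) => ->; rewrite inx_out //; lia.
Qed.

Lemma inx_ext_succ_down J p : downstep alpha p -> inx_ext J p.+1 = (p < N) ==> inx J p.+1.
Proof.
move=> down; have pN : p <= N by apply: step_le_nn; rewrite down orbT.
case: (ltnP p N) => [p_lt_N|p_ge_N] /=; first by rewrite inx_extE //; lia.
have pE : p = N by lia.
by move: down; rewrite pE (proj2 last_stepE) /inx_ext eqxx => ->; rewrite orbT.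
Qed.

Lemma inx_ext_ideal_up I p : is_ideal I -> upstep alpha p -> inx_ext I p.+1 -> inx_ext I p.
Proof.
move=> idI up; have pN : p <= N by apply: step_le_nn; rewrite up.
rewrite inx_ext_succ_up // inx_ext_le //; case: (posnP p) => // p0.
exact: inx_ideal_up.
Qed.

Lemma inx_ext_ideal_down I p : is_ideal I -> downstep alpha p -> inx_ext I p -> inx_ext I p.+1.
Proof.
move=> idI down; have p0 := downstep_gt0 down.
have pN : p <= N by apply: step_le_nn; rewrite down orbT.
rewrite inx_extE ?p0 // inx_ext_succ_down // => Ip; apply/implyP => p_lt_N.
exact: inx_ideal_down.
Qed.

Lemma inx_ext_Pro_up I p : is_ideal I -> 0 < p <= N -> upstep alpha p.-1 -> upstep alpha p ->
  inx_ext (Pro I) p = if inx_ext I p then inx_ext I p.+1 else inx_ext (Pro I) p.-1.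
Proof.
move=> idI p_in; have [q qE] := exists_ord_succ p_in; rewrite -qE in p_in * => /= up1 up2.
have down1 : downstep alpha q = false by apply: contraTF up1 => /downstep_not_upstep.
have down2 : downstep alpha q.+1 = false by apply: contraTF up2 => /downstep_not_upstep.
rewrite !(inx_extE _ p_in) inx_ord inx_ext_succ_up // inx_ext_le ?(ltnW (ltn_ord q)) // inx_ord.
case: (boolP (q \in I)) => qI; first by rewrite in_Pro_in // up2 down1 andbF orbF.
by rewrite in_Pro_notin // down2 up1 andbT /= andbT.
Qed.

Lemma inx_ext_Pro_down I p : is_ideal I -> 0 < p <= N -> downstep alpha p.-1 -> downstep alpha p ->
  inx_ext (Pro I) p = if inx_ext I p then inx_ext (Pro I) p.-1 else inx_ext I p.+1.
Proof.
move=> idI p_in; have [q qE] := exists_ord_succ p_in; rewrite -qE in p_in * => /= down1 down2.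
have up1 : upstep alpha q = false by apply/negbTE/downstep_not_upstep.
have up2 : upstep alpha q.+1 = false by apply/negbTE/downstep_not_upstep.
have q0 := downstep_gt0 down1.
rewrite !(inx_extE _ p_in) inx_ord inx_ext_succ_down // inx_extE ?q0 ?(ltnW (ltn_ord q)) // inx_ord.
case: (boolP (q \in I)) => qI; first by rewrite in_Pro_in // up2 q0 down1.
by rewrite in_Pro_notin // up1 down2 andbF.
Qed.

Lemma inx_ext_Pro_below I p : is_ideal I -> upstep alpha p -> inx_ext I p.+1 -> inx_ext (Pro I) p.
Proof.
move=> idI up Ip1; have Ip := inx_ext_ideal_up idI up Ip1.
have pN : p <= N by apply: step_le_nn; rewrite up.
case: (posnP p) => [-> //|p0]; have p_in : 0 < p <= N by rewrite p0.
move: Ip Ip1; rewrite !(inx_extE _ p_in) inx_ext_succ_up //.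
have [q qE] := exists_ord_succ p_in; rewrite -qE in up *; rewrite !inx_ord => qI Iq2.
by rewrite in_Pro_in // up Iq2.
Qed.

Lemma inx_ext_Pro_above I p : is_ideal I -> downstep alpha p -> inx_ext (Pro I) p -> inx_ext I p.+1.
Proof.
move=> idI down; case: (boolP (inx_ext I p)) => [Ip _ | nIp]; first exact: inx_ext_ideal_down.
have pN : p <= N by apply: step_le_nn; rewrite down orbT.
have p_in : 0 < p <= N by rewrite (downstep_gt0 down).
move: nIp; rewrite !(inx_extE _ p_in) inx_ext_succ_down //.
have [q qE] := exists_ord_succ p_in; rewrite -qE in down *; rewrite !inx_ord => qI.
by rewrite in_Pro_notin // down => /andP [_].
Qed.

(* Position [l] of the segment S_i, i.e. x_(a_(i-1) + l), for [0 <= l <= alpha_i]. *)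
Definition seg_in i J l := inx_ext J (aa i.-1 + l).

Section Segment.
Variable i : nat.
Hypothesis i_t : 0 < i <= t.

Lemma seg_pos_le l : l <= alp i -> aa i.-1 + l <= N.+1.
Proof. by move=> l_al; rewrite nnE; have := @leq_aa i t; have := @aaE i; lia. Qed.

Lemma seg_stepE l : l < alp i -> upstep alpha (aa i.-1 + l) = odd i /\ downstep alpha (aa i.-1 + l) = ~~ odd i.
Proof. by move=> l_al; apply: stepE => //; have := @aaE i; lia. Qed.

Lemma seg_in_inner J l : 0 < l < alp i -> seg_in i J l = inx J (aa i.-1 + l).
Proof. by move=> l_al; rewrite /seg_in inx_extE //; have := seg_pos_le (l := alp i); lia. Qed.

Lemma seg_in0 J : seg_in i J 0 = (i == 1) || inx J (aa i.-1).
Proof.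
rewrite /seg_in addn0 /inx_ext.
have -> : (aa i.-1 == 0) = (i == 1).
  case: (eqVneq i 1) => [-> |i1]; first by rewrite aa0.
  by have := @leq_aa 1 i.-1; have := aa1_ge2; lia.
have -> : (aa i.-1 == N.+1) = false by have := seg_pos_le (leqnn _); have := alp_gt0 i_t; lia.
by rewrite andFb orbF.
Qed.

Lemma seg_in_alp J : seg_in i J (alp i) = (i == t) && ~~ odd i || inx J (aa i).
Proof.
rewrite /seg_in -aaE ?(andP i_t).1 // /inx_ext.
have -> : (aa i == 0) = false by have := @leq_aa 1 i; have := aa1_ge2; lia.
have -> : (aa i == N.+1) = (i == t) by rewrite nnE eqn_leq !leq_aa_eq -?eqn_leq; lia.
by case: eqP => // ->.
Qed.

Lemma seg_in_antitone I l : is_ideal I -> odd i -> l < alp i -> seg_in i I l.+1 -> seg_in i I l.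
Proof.
move=> idI odd_i l_al; rewrite /seg_in addnS; apply: inx_ext_ideal_up => //.
by case: (seg_stepE l_al) => ->.
Qed.

Lemma seg_in_monotone I l : is_ideal I -> ~~ odd i -> l < alp i -> seg_in i I l -> seg_in i I l.+1.
Proof.
move=> idI even_i l_al; rewrite /seg_in addnS; apply: inx_ext_ideal_down => //.
by case: (seg_stepE l_al) => _ ->.
Qed.

Lemma seg_in_Pro_up I l : is_ideal I -> odd i -> 0 < l < alp i ->
  seg_in i (Pro I) l = if seg_in i I l then seg_in i I l.+1 else seg_in i (Pro I) l.-1.
Proof.
move=> idI odd_i l_al; have predE : aa i.-1 + l.-1 = (aa i.-1 + l).-1 by lia.
have [up1 _] := seg_stepE (l := l.-1) ltac:(lia); have [up2 _] := seg_stepE (l := l) ltac:(lia).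
rewrite /seg_in addnS predE; apply: inx_ext_Pro_up => //; last by rewrite up2.
  by have := seg_pos_le (leqnn _); lia.
by rewrite -predE up1.
Qed.

Lemma seg_in_Pro_down I l : is_ideal I -> ~~ odd i -> 0 < l < alp i ->
  seg_in i (Pro I) l = if seg_in i I l then seg_in i (Pro I) l.-1 else seg_in i I l.+1.
Proof.
move=> idI even_i l_al; have predE : aa i.-1 + l.-1 = (aa i.-1 + l).-1 by lia.
have [_ down1] := seg_stepE (l := l.-1) ltac:(lia); have [_ down2] := seg_stepE (l := l) ltac:(lia).
rewrite /seg_in addnS predE; apply: inx_ext_Pro_down => //; last by rewrite down2.
  by have := seg_pos_le (leqnn _); lia.
by rewrite -predE down1.
Qed.

Lemma seg_in_Pro_first_up I : is_ideal I -> odd i -> seg_in i I 1 -> seg_in i (Pro I) 0.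
Proof.
move=> idI odd_i; have [up _] := seg_stepE (alp_gt0 i_t).
by rewrite /seg_in addn1 addn0 in up *; apply: inx_ext_Pro_below; rewrite ?up.
Qed.

Lemma seg_in_Pro_first_down I : is_ideal I -> ~~ odd i -> seg_in i (Pro I) 0 -> seg_in i I 1.
Proof.
move=> idI even_i; have [_ down] := seg_stepE (alp_gt0 i_t).
by rewrite /seg_in addn1 addn0 in down *; apply: inx_ext_Pro_above; rewrite ?down.
Qed.

End Segment.

Lemma gen_odd (R : realType) i j I : 0 < i <= t -> odd i -> 0 < j < alp i -> is_ideal I ->
  gen R i j I = ((i == 1)%:R * (alp i - j)%:R
                 + (chain_pot R (alp i) j (seg_in i (Pro I)) - chain_pot R (alp i) j (seg_in i I)))%R.
Proof.
move=> i_t odd_i j_al idI.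
have := @chain_pot_promotion R _ _ j_al (seg_in i I) (seg_in i (Pro I))
  (fun l l_al => seg_in_antitone i_t idI odd_i l_al)
  (fun l l_al => seg_in_Pro_up i_t idI odd_i l_al) (seg_in_Pro_first_up i_t idI odd_i).
rewrite seg_in_inner // seg_in_alp // seg_in0 // odd_i andbF /= => <-.
rewrite /gen chi_ij_odd // chi_peak_odd // chi_valley_odd //.
by case: (eqVneq i 1) => [->|_]; rewrite ?aa0 ?inx0 /=; ring.
Qed.

Lemma gen_even (R : realType) i j I : 0 < i <= t -> ~~ odd i -> 0 < j < alp i -> is_ideal I ->
  gen R i j I = ((i == t)%:R * (alp i - j)%:R
                 + (chain_pot R (alp i) (alp i - j) (negb \o seg_in i I)
                    - chain_pot R (alp i) (alp i - j) (negb \o seg_in i (Pro I))))%R.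
Proof.
move=> i_t even_i j_al idI.
have i1 : (i == 1) = false by apply: contraNF even_i => /eqP ->.
have j'_al : 0 < alp i - j < alp i by lia.
have anti l : l < alp i -> ~~ seg_in i I l.+1 -> ~~ seg_in i I l.
  by move=> l_al; apply: contra; apply: seg_in_monotone.
have step l : 0 < l < alp i -> ~~ seg_in i (Pro I) l =
    if ~~ seg_in i I l then ~~ seg_in i I l.+1 else ~~ seg_in i (Pro I) l.-1.
  by move=> l_al; rewrite seg_in_Pro_down // if_neg; case: (seg_in i I l).
have first : ~~ seg_in i I 1 -> ~~ seg_in i (Pro I) 0.
  by apply: contra; apply: seg_in_Pro_first_down.
have := @chain_pot_promotion R _ _ j'_al (negb \o seg_in i I) (negb \o seg_in i (Pro I)) anti step first.
rewrite /= seg_in_inner // seg_in_alp // seg_in0 // i1 even_i andbT subKn ?(ltnW (andP j_al).2) //.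
move=> chainE; rewrite -[X in (_ + X)%R]opprB -chainE /gen chi_ij_even // chi_peak_even // chi_valley_even //.
have j_le : j <= alp i by lia.
case: (eqVneq i t) => [it|_] /=.
  rewrite (@inx_out I (aa i)); last by rewrite it -nnE ltnn andbF.
  by case: (inx I _) (inx I _) => [] [] /=; rewrite natrB //; ring.
by case: (inx I _) (inx I _) (inx I _) => [] [] [] /=; rewrite natrB //; ring.
Qed.

Section Coboundary.
Variables (R : realType) (c : nat -> nat -> R).
Local Open Scope ring_scope.

Definition seg_const i j : R := ((i == 1) || (i == t) && ~~ odd i)%:R * (alp i - j)%:R.

Definition seg_pot i j J : R :=
  if odd i then chain_pot R (alp i) j (seg_in i J)
  else - chain_pot R (alp i) (alp i - j) (negb \o seg_in i J).

Lemma gen_coboundary i j I : (0 < i <= t)%N -> (0 < j < alp i)%N -> is_ideal I ->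
  gen R i j I = seg_const i j + seg_pot i j (Pro I) - seg_pot i j I.
Proof.
move=> i_t j_al idI; rewrite /seg_const /seg_pot; case: (boolP (odd i)) => [odd_i|even_i].
  by rewrite gen_odd // andbF orbF addrA.
have -> : (i == 1) = false by apply: contraNF even_i => /eqP ->.
by rewrite gen_even // andbT /=; ring.
Qed.

Definition span_const : R :=
  \sum_(1 <= i < t.+1) \sum_(1 <= j < (alp i).-1.+1) c i j * seg_const i j.

Definition span_pot J : R :=
  \sum_(1 <= i < t.+1) \sum_(1 <= j < (alp i).-1.+1) c i j * seg_pot i j J.

Lemma span_stat_coboundary I : is_ideal I -> span_stat c I = span_const + span_pot (Pro I) - span_pot I.
Proof.
move=> idI; rewrite /span_stat /span_const /span_pot -big_split -sumrB /=.
apply: eq_big_nat => i i_t; rewrite -big_split -sumrB /=.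
apply: eq_big_nat => j j_al; rewrite gen_coboundary //; try lia.
by rewrite -mulrDr -mulrBr.
Qed.

End Coboundary.
End Fence.

Theorem theorem7p5 (R : realType) (alpha : seq nat) (c : nat -> nat -> R) :
  2 <= size alpha ->
  all (fun x => 0 < x) alpha ->
  2 <= head 0 alpha ->
  2 <= last 0 alpha ->
  homomesic (is_ideal (alpha:=alpha)) (Pro (alpha:=alpha)) (span_stat c).
Proof.
move=> t_ge2 alpha_pos head_ge2 last_ge2.
apply: (homomesic_coboundary (g := span_pot c) (c := span_const alpha c)).
- exact: Pro_ideal.
- exact: Pro_inj.
- exact: span_stat_coboundary.
Qed.
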